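(* Let $\mathcal{C}_0\subseteq\mathrm{GF}(q^m)^r$ be a linear code with rank weight enumerator $W^{\mathrm{R}}_{\mathcal{C}_0}(x,y)$, and for $s\ge0$ let $\mathcal{C}_s$ be its $s$-th order $\mathbf{B}$-elementary extension, with rank weight enumerator $W^{\mathrm{R}}_{\mathcal{C}_s}(x,y)$. Then $W^{\mathrm{R}}_{\mathcal{C}_s}(x,y)$ does not depend on $\mathbf{B}$ and $$W^{\mathrm{R}}_{\mathcal{C}_s}(x,y)=W^{\mathrm{R}}_{\mathcal{C}_0}(x,y)*\big[x+(q^m-1)y\big]^{[s]}.$$
   Context: $q$ is a prime power. For $\mathbf{x}\in\mathrm{GF}(q^m)^N$, $\mathrm{rk}(\mathbf{x})$ is the dimension over $\mathrm{GF}(q)$ of the $\mathrm{GF}(q)$-span of its coordinates; the rank weight enumerator of $\mathcal{C}\subseteq\mathrm{GF}(q^m)^N$ is $\sum_{\mathbf{c}\in\mathcal{C}}y^{\mathrm{rk}(\mathbf{c})}x^{N-\mathrm{rk}(\mathbf{c})}$. For $s\ge1$ and an $s\times r$ matrix $\mathbf{B}$ over $\mathrm{GF}(q)$, the $s$-th order $\mathbf{B}$-elementary extension of a linear code $\mathcal{C}_0\subseteq\mathrm{GF}(q^m)^r$ is $\mathcal{C}_s=\{(c_0,\dots,c_{r+s-1})\in\mathrm{GF}(q^m)^{r+s}:(c_0,\dots,c_{r-1})-(c_r,\dots,c_{r+s-1})\mathbf{B}\in\mathcal{C}_0\}$; the $0$-th order extension is $\mathcal{C}_0$ itself. $q$-product: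 for homogeneous polynomials $a(x,y;m)=\sum_{i=0}^{d}a_i(m)y^ix^{d-i}$ and $b(x,y;m)=\sum_{j=0}^{e}b_j(m)y^jx^{e-j}$ of degrees $d,e$, with coefficients real functions of $m$ (zero outside the given ranges), $a*b=\sum_{u=0}^{d+e}c_u(m)y^ux^{d+e-u}$ with $c_u(m)=\sum_{i=0}^uq^{ie}a_i(m)b_{u-i}(m-i)$. $q$-powers: $a^{[0]}=1$, $a^{[l]}=a^{[l-1]}*a$. Here $x+(q^m-1)y$ has coefficients $1$ and $q^m-1$; the coefficients of $W^{\mathrm{R}}_{\mathcal{C}_0}$ are regarded as constants in $m$. *)

From HB Require Import structures.
From mathcomp Require Import all_boot all_order all_algebra all_field.
Set Implicit Arguments. Unset Strict Implicit. Unset Printing Implicit Defensive.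
Import Order.TTheory GRing.Theory Num.Theory.
Local Open Scope ring_scope.

(* Setting: F = GF(q) a finite field, L a finite-dimensional field extension
   of F; K := finvect_type L is the same field GF(q^m) equipped with a finType
   structure (so that codewords can be counted). q = #|F|, m = \dim_F K. *)

Definition rk (F : finFieldType) (L : fieldExtType F) (N : nat)
    (x : 'rV[finvect_type L]_N) : nat :=
  let coords : seq (finvect_type L) := [seq x ord0 i | i <- enum 'I_N] in
  \dim (<<coords>>%VS : {vspace finvect_type L}).

Definition rkcount (F : finFieldType) (L : fieldExtType F) (N : nat)
    (C : {set 'rV[finvect_type L]_N}) (u : nat) : nat :=
  #|[set c in C | rk c == u]|.

Definition code_set (F : finFieldType) (L : fieldExtType F) (r : nat)
    (C0 : {vspace 'rV[finvect_type L]_r}) : {set 'rV[finvect_type L]_r} :=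
  [set c | c \in C0].

Definition elem_ext (F : finFieldType) (L : fieldExtType F) (r s : nat)
    (C0 : {vspace 'rV[finvect_type L]_r}) (B : 'M[F]_(s, r))
    : {set 'rV[finvect_type L]_(r + s)} :=
  [set c | (lsubmx c - rsubmx c *m map_mx (in_alg (finvect_type L)) B) \in C0].

(* Homogeneous polynomials sum_{i<=d} a_i(m) y^i x^(d-i) whose coefficients
   are functions of m (m ranging over integers, values rational):
   a pair (degree d, coefficient function). *)
Definition hpoly := (nat * (nat -> int -> rat))%type.

Definition hcoef (a : hpoly) (i : nat) (m : int) : rat :=
  if (i <= a.1)%N then a.2 i m else 0.

Definition qprod (q : nat) (a b : hpoly) : hpoly :=
  ((a.1 + b.1)%N, fun u m =>
     \sum_(i < u.+1) (q%:R ^+ (i * b.1)) * hcoef a i m * hcoef b (u - i) (m - i%:Z)).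

Definition qpow (q : nat) (a : hpoly) (l : nat) : hpoly :=
  iter l (fun p => qprod q p a) (0%N, fun i _ => if i == 0%N then 1 else 0).

Definition lin_hpoly (q : nat) : hpoly :=
  (1%N, fun i m => if i == 0%N then 1 else (q%:R : rat) ^ m - 1).

Definition rwe (F : finFieldType) (L : fieldExtType F) (N : nat)
    (C : {set 'rV[finvect_type L]_N}) : hpoly :=
  (N, fun i _ => (rkcount C i)%:R).

From HB Require Import structures.
From mathcomp Require Import all_boot all_order all_algebra all_field.
From mathcomp Require Import ring.
Import Order.TTheory GRing.Theory Num.Theory.
Set Implicit Arguments. Unset Strict Implicit. Unset Printing Implicit Defensive.
Local Open Scope ring_scope.

(* Write K = GF(q^m).  The map (c, a) |-> (c + a B, a) is a bijection from
   C_0 x K^s onto C_s, and since B has entries in GF(q) the entries of a B lie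
   in the GF(q)-span of those of a, so the rank of the image is
   dim (span c + span a), whatever B is.  It remains to count the a in K^s
   that raise a space V of dimension d to dimension d + j.  Adjoining one more
   coordinate x keeps the dimension for the q^dim choices of x inside the
   current space and raises it by one for the q^m - q^dim others; this is the
   recursion of the coefficients of [x + (q^m - 1) y]^[s] (with m shifted by d),
   so the count is q^(d s) times the coefficient of y^j at m - d.  Summing over
   the codewords c grouped by rank gives the q-product coefficient. *)

Lemma natr_card_set (R : nzRingType) (T : finType) (P : pred T) :
  (#|[set x | P x]|%:R : R) = \sum_x (P x)%:R.
Proof.
rewrite -sum1_card natr_sum big_mkcond; apply: eq_bigr => x _.
by rewrite inE; case: (P x).
Qed.

Lemma sum_by_fibres (R : nzRingType) (T : finType) (P : pred T)
    (k : T -> nat) (H : nat -> R) (n : nat) :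
  (forall i, (n <= i)%N -> H i = 0) ->
  \sum_(x | P x) H (k x) = \sum_(i < n) #|[set x | P x & k x == i]|%:R * H i.
Proof.
move=> H_vanish.
under [RHS]eq_bigr => i _.
  rewrite -sum1_card natr_sum mulr_suml.
  rewrite (eq_big (fun x => P x && (k x == i)) (fun x => H (k x))) => [|x|x].
  - over.
  - by rewrite inE.
  - by rewrite inE => /andP[_ /eqP->]; rewrite mul1r.
rewrite (exchange_big_dep P) => [|i x _ /andP[] //].
apply: eq_bigr => x Px.
have [lt_kn | le_nk] := ltnP (k x) n.
  rewrite (big_pred1 (Ordinal lt_kn)) // => i /=.
  by rewrite Px /= eq_sym -val_eqE.
rewrite H_vanish // big_pred0 // => i.
by rewrite Px gtn_eqF // (leq_trans (ltn_ord i)).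
Qed.

Lemma hcoef_gt (a : hpoly) (i : nat) (m : int) : (a.1 < i)%N -> hcoef a i m = 0.
Proof. by rewrite /hcoef ltnNge => /negbTE->. Qed.

(* No bound on [u] is needed: both sides vanish beyond the degree of [qprod q a b]. *)
Lemma hcoef_qprod (q : nat) (a b : hpoly) (u : nat) (m : int) :
  hcoef (qprod q a b) u m =
  \sum_(i < u.+1) q%:R ^+ (i * b.1) * hcoef a i m * hcoef b (u - i) (m - i%:Z).
Proof.
rewrite {1}/hcoef /=; case: leqP => // lt_deg_u.
symmetry; apply: big1 => i _.
have [le_ia | lt_ai] := leqP i a.1; last by rewrite hcoef_gt // mulr0 mul0r.
by rewrite (@hcoef_gt b) ?mulr0 // ltn_subRL (leq_ltn_trans _ lt_deg_u) ?leq_add2r.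
Qed.

Lemma hcoef_qprod_lin (q : nat) (a : hpoly) (j : nat) (m : int) :
  hcoef (qprod q a (lin_hpoly q)) j m =
  q%:R ^+ j * hcoef a j m +
  (if j is j'.+1 then q%:R ^+ j' * hcoef a j' m * ((q%:R : rat) ^ (m - j'%:Z) - 1)
   else 0).
Proof.
rewrite hcoef_qprod big_ord_recr /= subnn muln1 mulr1 addrC; congr (_ + _).
case: j => [|j]; first by rewrite big_ord0.
rewrite big_ord_recr /= subSnn muln1 big1 ?add0r // => i _.
by rewrite (@hcoef_gt (lin_hpoly q)) ?mulr0 //= ltn_subRL addn1 ltnS.
Qed.

Lemma size_qpow_lin (q s : nat) : (qpow q (lin_hpoly q) s).1 = s.
Proof. by elim: s => // s IHs; rewrite /qpow iterS /= -/(qpow _ _ _) IHs addn1. Qed.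

Definition linpow_coef (q s j : nat) (m : int) : rat :=
  hcoef (qpow q (lin_hpoly q) s) j m.

Lemma linpow_coef0 (q j : nat) (m : int) : linpow_coef q 0 j m = (j == 0%N)%:R.
Proof. by case: j. Qed.

Lemma linpow_coefS (q s j : nat) (m : int) :
  linpow_coef q s.+1 j m =
  q%:R ^+ j * linpow_coef q s j m +
  (if j is j'.+1 then q%:R ^+ j' * linpow_coef q s j' m * ((q%:R : rat) ^ (m - j'%:Z) - 1)
   else 0).
Proof. by rewrite /linpow_coef /qpow iterS -/(qpow _ _ _) hcoef_qprod_lin. Qed.

Section EntrySpan.

Variables (F : finFieldType) (L : fieldExtType F).
Local Notation K := (finvect_type L).

Definition entry_span (N : nat) (x : 'rV[K]_N) : {vspace K} :=
  <<[seq x ord0 i | i <- enum 'I_N]>>%VS.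

Lemma rk_entry_span (N : nat) (x : 'rV[K]_N) : rk x = \dim (entry_span x).
Proof. by []. Qed.

Lemma memv_entry_span (N : nat) (x : 'rV[K]_N) (j : 'I_N) : x ord0 j \in entry_span x.
Proof. by apply: memv_span; apply: map_f; rewrite mem_enum. Qed.

Lemma entry_span_subv (N : nat) (x : 'rV[K]_N) (U : {vspace K}) :
  (forall j, x ord0 j \in U) -> (entry_span x <= U)%VS.
Proof. by move=> xU; apply/span_subvP => _ /mapP[j _ ->]. Qed.

Lemma rk_leq (N : nat) (x : 'rV[K]_N) : (rk x <= N)%N.
Proof. by rewrite rk_entry_span (leq_trans (dim_span _)) // size_map size_enum_ord. Qed.

Lemma entry_span_row_mx (n1 n2 : nat) (x : 'rV[K]_n1) (y : 'rV[K]_n2) :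
  entry_span (row_mx x y) = (entry_span x + entry_span y)%VS.
Proof.
apply/eqP; rewrite eqEsubv subv_add; apply/and3P; split.
- apply: entry_span_subv => j; rewrite -(splitK j); case: (split j) => k /=.
    by rewrite row_mxEl (subvP (addvSl _ _)) ?memv_entry_span.
  by rewrite row_mxEr (subvP (addvSr _ _)) ?memv_entry_span.
- by apply: entry_span_subv => j; rewrite -(row_mxEl x y) memv_entry_span.
- by apply: entry_span_subv => j; rewrite -(row_mxEr x y) memv_entry_span.
Qed.

Lemma entry_span_const1 (x : K) : entry_span (const_mx x : 'rV[K]_1) = <[x]>%VS.
Proof.
apply/eqP; rewrite eqEsubv -memvE; apply/andP; split.
  by apply: entry_span_subv => j; rewrite mxE memv_line.
by have := memv_entry_span (const_mx x : 'rV[K]_1) ord0; rewrite mxE.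
Qed.

Lemma entry_span_rV0 (x : 'rV[K]_0) : entry_span x = 0%VS.
Proof. by apply/eqP; rewrite -subv0; apply: entry_span_subv => -[]. Qed.

Lemma entry_span_mulmx_subv (n s : nat) (a : 'rV[K]_s) (B : 'M[F]_(s, n)) :
  (entry_span (a *m map_mx (in_alg K) B) <= entry_span a)%VS.
Proof.
apply: entry_span_subv => j; rewrite mxE; apply: rpred_sum => k _.
by rewrite mxE /= mulr_algr rpredZ // memv_entry_span.
Qed.

Lemma entry_span_elem_ext (n s : nat) (c : 'rV[K]_n) (a : 'rV[K]_s) (B : 'M[F]_(s, n)) :
  entry_span (row_mx (c + a *m map_mx (in_alg K) B) a) =
  (entry_span c + entry_span a)%VS.
Proof.
set b := a *m _; rewrite entry_span_row_mx.
have b_a : (entry_span b <= entry_span a)%VS by apply: entry_span_mulmx_subv.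
apply/eqP; rewrite eqEsubv !subv_add !addvSr !andbT; apply/andP; split.
  apply: entry_span_subv => j; rewrite mxE memv_add ?memv_entry_span //.
  exact: subvP b_a _ (memv_entry_span _ _).
apply: entry_span_subv => j.
have -> : c ord0 j = (c + b) ord0 j - b ord0 j by rewrite mxE addrK.
by rewrite memv_add ?memv_entry_span ?rpredN // (subvP b_a) ?memv_entry_span.
Qed.

End EntrySpan.

Lemma dim_addv_line (k : fieldType) (vT : vectType k) (W : {vspace vT}) (x : vT) :
  \dim (W + <[x]>) = if x \in W then \dim W else (\dim W).+1.
Proof.
case: ifPn => [xW | xNW]; first by move: xW; rewrite memvE => /addv_idPl->.
have x_neq0 : x != 0 by apply: contraNneq xNW => ->; rewrite mem0v.
rewrite dimv_disjoint_sum ?dim_vline ?x_neq0 ?addn1 //.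
apply/eqP; rewrite -subv0; apply/subvP => y /memv_capP[yW /vlineP[c y_cx]].
move: yW; rewrite y_cx memv0; have [-> | c_neq0 cxW] := eqVneq c 0.
  by rewrite scale0r eqxx.
by move: xNW; rewrite -(scalerK c_neq0 x) memvZ.
Qed.

Section ExtensionCount.

Variables (F : finFieldType) (L : fieldExtType F).
Local Notation K := (finvect_type L).
Local Notation m := (\dim (fullv : {vspace K})).

Lemma sum_dim_addv_line (R : nzRingType) (W : {vspace K}) (f : nat -> R) :
  \sum_(x : K) f (\dim (W + <[x]>)) =
  #|F|%:R ^+ \dim W * f (\dim W) + (#|F|%:R ^+ m - #|F|%:R ^+ \dim W) * f (\dim W).+1.
Proof.
rewrite (bigID (fun x => x \in W)) /=.
rewrite (eq_bigr (fun=> f (\dim W))) => [|x xW]; last by rewrite dim_addv_line xW.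
rewrite [X in _ + X](eq_bigr (fun=> f (\dim W).+1)) => [|x xNW]; last first.
  by rewrite dim_addv_line (negbTE xNW).
rewrite [X in _ + X](eq_bigl (fun x => x \in [predC W])) => [|x]; last by rewrite !inE.
rewrite !sumr_const.
have cardK : #|K| = (#|F| ^ m)%N.
  by rewrite -card_vspace; apply: eq_card => x; rewrite memvf.
have cardNW : #|[predC W]| = (#|F| ^ m - #|F| ^ \dim W)%N.
  by rewrite -cardK -card_vspace -(cardC W) addKn.
have cardW : #|W| = (#|F| ^ \dim W)%N by apply: card_vspace.
rewrite cardW cardNW -![f _ *+ _]mulr_natl natrB ?natrX //.
by rewrite leq_pexp2l ?dimvS ?subvf // ltnW // finNzRing_gt1.
Qed.

Definition ext_count (V : {vspace K}) (s u : nat) : nat :=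
  #|[set a : 'rV[K]_s | \dim (V + entry_span a) == u]|.

Lemma ext_count0 (V : {vspace K}) (u : nat) :
  (ext_count V 0 u)%:R = (\dim V == u)%:R :> rat.
Proof.
rewrite natr_card_set (eq_bigr (fun=> (\dim V == u)%:R)) => [|a _].
  by rewrite sumr_const card_mx muln0 expn0.
by rewrite entry_span_rV0 addv0.
Qed.

Lemma ext_count_lt (V : {vspace K}) (s u : nat) :
  (u < \dim V)%N -> ext_count V s u = 0%N.
Proof.
move=> lt_u_V; apply: eq_card0 => a; rewrite !inE.
by apply: contraTF lt_u_V => /eqP <-; rewrite -leqNgt dimvS ?addvSl.
Qed.

Lemma ext_countS (V : {vspace K}) (s u : nat) :
  (ext_count V s.+1 u)%:R =
  #|F|%:R ^+ u * (ext_count V s u)%:R +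
  (if u is u'.+1 then (#|F|%:R ^+ m - #|F|%:R ^+ u') * (ext_count V s u')%:R else 0)
  :> rat.
Proof.
rewrite /ext_count natr_card_set.
rewrite (reindex (fun p : K * 'rV[K]_s => row_mx (const_mx p.1 : 'rV[K]_1) p.2)) /=; last first.
  exists (fun c : 'rV[K]_(1 + s) => (lsubmx c ord0 ord0, rsubmx c)) => [[x a] _ | c _] /=.
    by rewrite row_mxKl row_mxKr mxE.
  suff -> : const_mx (lsubmx c ord0 ord0) = lsubmx c by rewrite hsubmxK.
  by apply/rowP => j; rewrite (ord1 j) mxE.
under eq_bigr => p _ do
  rewrite [entry_span _](entry_span_row_mx (const_mx p.1 : 'rV_1) p.2)
          entry_span_const1 [(<[_]> + _)%VS]addvC addvA.
rewrite -(pair_bigA _ (fun (x : K) (a : 'rV[K]_s) =>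
                        (\dim (V + entry_span a + <[x]>) == u)%:R)) /=.
rewrite exchange_big /=.
under eq_bigr => a _ do rewrite (sum_dim_addv_line _ (fun d => (d == u)%:R : rat)).
rewrite big_split /= natr_card_set mulr_sumr; congr (_ + _).
  by apply: eq_bigr => a _; case: eqP => [->|_]; rewrite ?mulr0.
case: u => [|u]; first by rewrite big1 // => a _; rewrite mulr0.
rewrite natr_card_set mulr_sumr; apply: eq_bigr => a _.
by rewrite eqSS; case: eqP => [->|_]; rewrite ?mulr0.
Qed.

Lemma ext_count_dim_addn (V : {vspace K}) (s j : nat) :
  (ext_count V s (\dim V + j))%:R =
  #|F|%:R ^+ (\dim V * s) * linpow_coef #|F| s j (m%:Z - (\dim V)%:Z) :> rat.
Proof.
have q_neq0 : (#|F|%:R : rat) != 0 by rewrite pnatr_eq0 -lt0n ltnW ?finNzRing_gt1.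
elim: s j => [|s IHs] j.
  by rewrite ext_count0 linpow_coef0 muln0 mul1r -{1}[\dim V]addn0 eqn_add2l eq_sym.
rewrite ext_countS linpow_coefS; case: j => [|j].
  have no_shrink : (if \dim V is d.+1
      then (#|F|%:R ^+ m - #|F|%:R ^+ d) * (ext_count V s d)%:R else 0) = 0 :> rat.
    by case def_d: (\dim V) => [|d] //; rewrite ext_count_lt ?mulr0 ?def_d.
  have := IHs 0%N; rewrite !addn0 no_shrink addr0 expr0 mul1r addr0 => ->.
  by rewrite mulnS exprD mulrA.
rewrite addnS /= -addnS !IHs.
set d := \dim V; set q := (#|F|%:R : rat).
have qE : q ^+ m = q ^ (m%:Z - d%:Z - j%:Z) * q ^+ j * q ^+ d.
  by rewrite !exprnP -!expfzDr // !subrK.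
rewrite qE addnS !exprS exprD mulnS exprD.
ring.
Qed.

Lemma rkcount_elem_ext_sum (r s : nat) (C0 : {vspace 'rV[K]_r}) (B : 'M[F]_(s, r)) (u : nat) :
  rkcount (elem_ext C0 B) u = (\sum_(c | c \in C0) ext_count (entry_span c) s u)%N.
Proof.
set BL := map_mx (in_alg K) B.
rewrite /rkcount -sum1_card.
rewrite (eq_bigl (fun c => (c \in elem_ext C0 B) && (rk c == u))) => [|c]; last first.
  by rewrite !inE.
rewrite (reindex (fun p : 'rV[K]_r * 'rV[K]_s => row_mx (p.1 + p.2 *m BL) p.2)) /=; last first.
  exists (fun c : 'rV[K]_(r + s) => (lsubmx c - rsubmx c *m BL, rsubmx c)).
    by move=> [c a] _ /=; rewrite row_mxKl row_mxKr addrK.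
  by move=> c _ /=; rewrite subrK hsubmxK.
rewrite (eq_bigl (fun p => (p.1 \in C0) && (\dim (entry_span p.1 + entry_span p.2) == u)))
  => [|[c a]]; last first.
  by rewrite inE row_mxKl row_mxKr addrK rk_entry_span entry_span_elem_ext.
rewrite -(pair_big_dep (fun c => c \in C0)
  (fun c (a : 'rV[K]_s) => \dim (entry_span c + entry_span a) == u) (fun _ _ => 1%N)) /=.
by apply: eq_bigr => c _; rewrite sum1_card; apply: eq_card => a; rewrite !inE.
Qed.

End ExtensionCount.

Lemma hcoef_rwe (F : finFieldType) (L : fieldExtType F) (N : nat)
    (C : {set 'rV[finvect_type L]_N}) (i : nat) (m : int) :
  hcoef (rwe C) i m = (rkcount C i)%:R.
Proof.
rewrite /hcoef /=; case: leqP => // lt_N_i.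
suff -> : rkcount C i = 0%N by [].
apply: eq_card0 => c; rewrite !inE.
by rewrite ltn_eqF ?andbF // (leq_ltn_trans (rk_leq c)).
Qed.

Lemma natr_rkcount_elem_ext (F : finFieldType) (L : fieldExtType F) (r s : nat)
    (C0 : {vspace 'rV[finvect_type L]_r}) (B : 'M[F]_(s, r)) (u : nat) :
  (rkcount (elem_ext C0 B) u)%:R =
  hcoef (qprod #|F| (rwe (code_set C0)) (qpow #|F| (lin_hpoly #|F|) s))
        u (\dim (fullv : {vspace finvect_type L}))%:Z.
Proof.
set q := #|F|; set m := \dim fullv.
pose H i := if (i <= u)%N then q%:R ^+ (i * s) * linpow_coef q s (u - i) (m%:Z - i%:Z)
            else 0 : rat.
rewrite rkcount_elem_ext_sum natr_sum (eq_bigr (fun c => H (rk c))) => [|c _]; last first.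
  rewrite /H rk_entry_span; case: leqP => [le_cu | lt_uc]; last by rewrite ext_count_lt.
  by rewrite -{1}(subnKC le_cu) ext_count_dim_addn.
rewrite (sum_by_fibres _ _ (n := u.+1)) => [|i]; last by rewrite /H ltnNge => /negbTE->.
rewrite hcoef_qprod size_qpow_lin; apply: eq_bigr => i _.
rewrite /H -ltnS ltn_ord hcoef_rwe mulrCA mulrA; congr (_ * _ * _).
by congr (_%:R); apply: eq_card => c; rewrite !inE.
Qed.

Theorem lemma8 (F : finFieldType) (L : fieldExtType F) (r s : nat)
    (C0 : {vspace 'rV[finvect_type L]_r}) :
  (forall B B' : 'M[F]_(s, r), forall u : nat,
     rkcount (elem_ext C0 B) u = rkcount (elem_ext C0 B') u) /\
  (forall B : 'M[F]_(s, r), forall u : nat,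
     (rkcount (elem_ext C0 B) u)%:R =
     hcoef (qprod #|F| (rwe (code_set C0)) (qpow #|F| (lin_hpoly #|F|) s))
           u (\dim (fullv : {vspace finvect_type L}))%:Z).
Proof.
split=> [B B' u|]; last exact: natr_rkcount_elem_ext.
apply/eqP; rewrite -(eqr_nat rat); apply/eqP.
exact: etrans (natr_rkcount_elem_ext C0 B u) (esym (natr_rkcount_elem_ext C0 B' u)).
Qed.
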